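(* Let $n$ be odd and squarefree, and let $A=S(n)$. Let $S=(x_1,\ldots,x_l)$ be a sequence in $\mathbb{Z}_n$ such that for every prime divisor $p$ of $n$, at least two terms of $S$ are coprime to $p$. Suppose at most one term of $S$ is a unit. Then $S$ is an $A$-weighted zero-sum sequence.
   Context: $\mathbb{Z}_n$ is the integers mod $n$, $U(n)$ its unit group. For $A\subseteq\mathbb{Z}_n$, a sequence $(x_1,\ldots,x_l)$ is an $A$-weighted zero-sum sequence if there exist $a_1,\ldots,a_l\in A$ with $\sum a_ix_i=0$. For odd $n=\prod p_i^{r_i}$ and $a\in U(n)$, $\left(\frac{a}{n}\right)=\prod\left(\frac{a}{p_i}\right)^{r_i}$ (Legendre symbols of the images of $a$ mod $p_i$), and $S(n)$ is the kernel of $a\mapsto\left(\frac{a}{n}\right)$ on $U(n)$. *)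

(* Z_n is represented by natural-number representatives
   with congruence mod n (this also covers n = 1, where 'Z_1 would be wrong). *)
From mathcomp Require Import all_boot all_order all_algebra.
Set Implicit Arguments. Unset Strict Implicit. Unset Printing Implicit Defensive.
Import GRing.Theory.

Definition legendre (a p : nat) : int :=
  if p %| a then 0%R
  else if [exists x : 'I_p, x * x == a %[mod p]] then 1%R else (-1)%R.

Definition jacobi (a n : nat) : int :=
  (\prod_(p <- primes n) legendre a p ^+ logn p n)%R.

Definition inS (n a : nat) : bool := coprime a n && (jacobi a n == 1%R).

Definition weighted_zero_sum (n : nat) (A : pred nat) (s : seq nat) : Prop :=
  exists a : nat -> nat,
    (forall i, i < size s -> A (a i)) /\
    \sum_(i < size s) a i * nth 0 s i = 0 %[mod n].

(* n is squarefree: the only d with d^2 | n is d = 1 (so n = 0 is excluded). *)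
Definition squarefree (n : nat) : Prop := forall d, d * d %| n -> d = 1.

(* Fix a prime p | n. Two terms of S are nonzero in the field F_p (where 2 != 0), which is
   enough to find weights that are all nonzero mod p and make the sum vanish mod p; rescaling,
   the weight of the (at most one) unit term is 1. The Chinese remainder theorem glues these
   local weights into weights coprime to n. A non-unit term is divisible by some prime q | n,
   so its weight mod q is irrelevant to the sum: choosing it as a residue or a non-residue
   mod q makes its Jacobi symbol 1. The unit term simply gets weight 1. *)

From mathcomp Require Import all_boot all_order all_algebra zify.
From Stdlib Require Import IndefiniteDescription.
Set Implicit Arguments. Unset Strict Implicit. Unset Printing Implicit Defensive.
Import GRing.Theory.

Section NonzeroWeights.

Local Open Scope ring_scope.
Variables (F : fieldType) (N : nat) (y : nat -> F).

Lemma nonzero_weights_sum_neq0 j k : 2 != 0 :> F -> (k < N)%N -> k != j -> y k != 0 ->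
  exists2 v : nat -> F, forall i, v i != 0 & \sum_(i < N | i != j :> nat) v i * y i != 0.
Proof.
move=> two_neq0 kN kj yk_neq0; pose ok := Ordinal kN.
set T := \sum_(i < N | i != j :> nat) y i.
have [T0 | T_neq0] := eqVneq T 0; last first.
  by exists (fun=> 1) => [i | ]; [exact: oner_neq0 | under eq_bigr do rewrite mul1r].
(* Otherwise doubling every weight but the one at k turns the sum into 2 T - y k = - y k. *)
exists (fun i => if i == k then 1 else 2) => [i | ]; first by case: ifP => _ //; exact: oner_neq0.
have splitT : T = y k + \sum_(i < N | (i != j :> nat) && (i != ok)) y i.
  by rewrite /T (bigD1 ok).
rewrite (bigD1 ok) //= eqxx mul1r.
rewrite (eq_bigr (fun i : 'I_N => 2 * y i)) => [|i /andP[_ ik]]; last first.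
  by rewrite ifN // -(inj_eq val_inj).
rewrite -mulr_sumr (_ : \sum_(_ < _ | _) _ = - y k); last first.
  by apply/eqP; rewrite -subr_eq0 opprK addrC -splitT T0.
by rewrite mulr_natl mulr2n addrA subrr add0r oppr_eq0.
Qed.

Lemma zero_sum_nonzero_weights j (v : nat -> F) : (j < N)%N -> y j != 0 ->
    (forall i, v i != 0) -> \sum_(i < N | i != j :> nat) v i * y i != 0 ->
  exists2 w : nat -> F, forall i, w i != 0 & \sum_(i < N) w i * y i = 0.
Proof.
move=> jN yj_neq0 v_neq0; set S := \sum_(_ < _ | _) _ => S_neq0.
exists (fun i => if i == j then - S / y j else v i) => [i | ].
  by case: ifP => _ //; rewrite mulf_neq0 ?oppr_eq0 ?invr_eq0.
rewrite (bigD1 (Ordinal jN)) //= eqxx mulfVK // addrC.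
apply/eqP; rewrite subr_eq0; apply/eqP/eq_big => i; first by rewrite -(inj_eq val_inj).
by rewrite -(inj_eq val_inj) => ij; rewrite ifN.
Qed.

Lemma nonzero_weights_zero_sum j k u : 2 != 0 :> F -> (j < N)%N -> (k < N)%N -> j != k ->
    y j != 0 -> y k != 0 ->
  exists w : nat -> F, [/\ forall i, w i != 0, w u = 1 & \sum_(i < N) w i * y i = 0].
Proof.
move=> two_neq0 jN kN jk yj yk.
have kj : k != j by rewrite eq_sym.
have [v v_neq0 Sv] := nonzero_weights_sum_neq0 two_neq0 kN kj yk.
have [w w_neq0 Sw] := zero_sum_nonzero_weights jN yj v_neq0 Sv.
exists (fun i => w i / w u); split => [i | | ].
- by rewrite mulf_neq0 ?invr_eq0.
- exact: divff.
- by under eq_bigr do rewrite mulrAC; rewrite -mulr_suml Sw mul0r.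
Qed.

End NonzeroWeights.

Lemma count_ge2_nth (T : Type) (a : pred T) (s : seq T) x0 : 2 <= count a s ->
  exists j k, [/\ j < k, k < size s, a (nth x0 s j) & a (nth x0 s k)].
Proof.
elim: s => [|x s IHs] //=; case ax: (a x) => /= cnt.
- have /(has_nthP x0)[k ks ak] : has a s by rewrite has_count.
  by exists 0, k.+1.
- by have [j [k [jk ks aj ak]]] := IHs cnt; exists j.+1, k.+1.
Qed.

Lemma count_le1_nth_find (T : Type) (a : pred T) (s : seq T) x0 i :
  count a s <= 1 -> i < size s -> a (nth x0 s i) -> i = find a s.
Proof.
elim: s i => [|x s IHs] [|i] //= cnt i_lt ai; first by rewrite ai.
have ax : a x = false.
  apply: negbTE; apply: contraTN cnt => ax; rewrite ax -ltnNge ltnS -has_count.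
  by apply/(has_nthP x0); exists i.
by rewrite ax; congr (_.+1); apply: IHs; rewrite // ax in cnt.
Qed.

Lemma local_weights p (s : seq nat) u : prime p -> odd p ->
    2 <= count (fun x => coprime x p) s ->
  exists c : nat -> nat,
    [/\ forall i, ~~ (p %| c i), c u = 1 & p %| \sum_(i < size s) c i * nth 0 s i].
Proof.
move=> p_pr p_odd cnt.
have Fp0 m : (m%:R == 0 :> 'F_p)%R = (p %| m) by rewrite (dvdn_pcharf (pchar_Fp p_pr)).
have coprimeFp m : coprime m p = (m%:R != 0 :> 'F_p)%R.
  by rewrite Fp0 coprime_sym prime_coprime.
have [j [k [jk ks sj sk]]] := count_ge2_nth 0 cnt.
have two_neq0 : (2%:R != 0 :> 'F_p)%R.
  by rewrite Fp0 dvdn_prime2 //; apply: contraTneq p_odd => ->.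
rewrite !coprimeFp in sj sk.
have [w [w_neq0 wu Sw]] :=
  nonzero_weights_zero_sum (y := fun i => ((nth 0 s i)%:R : 'F_p)%R) u two_neq0
    (ltn_trans jk ks) ks (negbT (ltn_eqF jk)) sj sk.
pose c i : nat := if i == u then 1 else w i.
have cw i : ((c i)%:R = w i :> 'F_p)%R by rewrite /c; case: eqP => [->|_]; rewrite ?wu ?natr_Zp.
exists c; split => [i | | ]; first by rewrite -Fp0 cw.
  by rewrite /c eqxx.
rewrite -Fp0 natr_sum -[X in _ == X]Sw; apply/eqP/eq_bigr => i _.
by rewrite natrM cw.
Qed.

Lemma legendre_mod a b p : a = b %[mod p] -> legendre a p = legendre b p.
Proof. by move=> eq_ab; rewrite /legendre /dvdn eq_ab. Qed.

Lemma legendre1 p : 1 < p -> legendre 1 p = 1%R.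
Proof.
move=> p_gt1; rewrite /legendre dvdn1 gtn_eqF //.
by case: existsP => // -[]; exists (Ordinal p_gt1).
Qed.

Lemma legendre_sqr a p : ~~ (p %| a) -> (legendre a p ^+ 2 = 1)%R.
Proof. by rewrite /legendre => /negbTE ->; case: ifP; rewrite ?sqrrN expr1n. Qed.

Lemma exists_nonresidue p : prime p -> odd p ->
  exists2 g, ~~ (p %| g) & legendre g p = (-1)%R.
Proof.
move=> p_pr p_odd; have p_gt0 := prime_gt0 p_pr.
have p_gt2 : 2 < p by rewrite ltn_neqAle prime_gt1 // andbT; apply: contraTneq p_odd => <-.
pose sq (x : 'I_p) : 'I_p := Ordinal (ltn_pmod (x * x) p_gt0).
(* Squaring identifies 1 and p - 1, so it is not onto. *)
have sq_not_inj : ~ injective sq.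
  have pm1 : p.-1 < p by rewrite ltn_predL.
  have sq_eq : sq (Ordinal (ltnW p_gt2)) = sq (Ordinal pm1).
    apply/val_inj => /=; rewrite (_ : p.-1 * p.-1 = (p - 2) * p + 1); last by nia.
    by rewrite muln1 modnMDl.
  by move=> /(_ _ _ sq_eq) /(congr1 val) /=; lia.
have [g g_nsq] : exists g, g \notin codom sq.
  apply/existsP; rewrite -negb_forall; apply/negP => /forallP sq_onto; apply: sq_not_inj.
  have /image_injP sq_inj : #|codom sq| == #|'I_p|.
    by apply/eqP/eq_card => y; rewrite sq_onto.
  by move=> x y; apply: sq_inj.
have g_lt := ltn_ord g.
have g_neq0 : g != 0 :> nat.
  apply: contraNneq g_nsq => g0; apply/codomP; exists (Ordinal p_gt0).
  by apply/val_inj; rewrite /= g0 mod0n.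
exists g; first by rewrite /dvdn modn_small.
rewrite /legendre /dvdn modn_small // (negbTE g_neq0) ifN //.
apply/existsP => -[x /eqP sq_x]; case/codomP: g_nsq; exists x.
by apply/val_inj; rewrite /= sq_x.
Qed.

Lemma legendre_onto p e : prime p -> odd p -> (e ^+ 2 = 1)%R ->
  exists2 g, ~~ (p %| g) & legendre g p = e.
Proof.
move=> p_pr p_odd; move/eqP; rewrite sqrf_eq1 => /orP[/eqP-> | /eqP->].
  by exists 1; [rewrite dvdn1 gtn_eqF ?prime_gt1 | exact/legendre1/prime_gt1].
exact: exists_nonresidue.
Qed.

Lemma squarefree_gt0 n : squarefree n -> 0 < n.
Proof. by case: n => // sf0; have := sf0 0 (dvdn0 _). Qed.

Lemma logn_squarefree n p : squarefree n -> p \in primes n -> logn p n = 1.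
Proof.
move=> n_sf p_n; have := p_n; rewrite mem_primes => /and3P[p_pr n_gt0 _].
have : 0 < logn p n by rewrite logn_gt0.
case e: (logn p n) => [|[|k]] // _.
have /n_sf p1 : p * p %| n by rewrite mulnn pfactor_dvdn ?e.
by rewrite p1 in p_pr.
Qed.

Lemma partn_squarefree n p : squarefree n -> p \in primes n -> n`_p = p.
Proof. by move=> n_sf p_n; rewrite p_part logn_squarefree. Qed.

Lemma jacobi_squarefree a n : squarefree n ->
  jacobi a n = (\prod_(p <- primes n) legendre a p)%R.
Proof.
by move=> n_sf; apply: eq_big_seq => p p_n; rewrite logn_squarefree // expr1.
Qed.

Lemma coprime_primes a n : 0 < n -> coprime a n = all (fun p => ~~ (p %| a)) (primes n).
Proof.
move=> n_gt0; apply/idP/allP => [co_an p | no_p].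
  rewrite mem_primes => /and3P[p_pr _ p_n]; apply: contraL co_an => p_a.
  by apply/negP => /(coprime_dvdl p_a); rewrite prime_coprime // p_n.
apply: contraT => nco; have g_gt1 : 1 < gcdn a n.
  by rewrite ltn_neqAle eq_sym nco gcdn_gt0 n_gt0 orbT.
have [q q_pr] := pdivP g_gt1; rewrite dvdn_gcd => /andP[q_a q_n].
by have := no_p q; rewrite mem_primes q_pr n_gt0 q_n q_a => /(_ isT).
Qed.

Lemma chinese_primes (l : seq nat) (r : nat -> nat) : uniq l -> all prime l ->
  exists x, forall p, p \in l -> x = r p %[mod p].
Proof.
elim: l => [|p l IHl] /=; first by exists 0.
case/andP => p_l l_uniq /andP[p_pr l_pr].
have [x xP] := IHl l_uniq l_pr.
have co_pl : coprime p (\prod_(q <- l) q).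
  rewrite prime_coprime // Euclid_dvd_prod // big_has; apply/hasPn => q q_l.
  by rewrite (dvdn_prime2 p_pr (allP l_pr q q_l)); apply: contraNneq p_l => ->.
exists (chinese p (\prod_(q <- l) q) (r p) x) => q.
rewrite inE => /predU1P[-> | q_l]; first exact: chinese_modl.
have q_dvd : q %| \prod_(q <- l) q by rewrite (big_rem q) ?dvdn_mulr.
by rewrite -(modn_dvdm _ q_dvd) chinese_modr // modn_dvdm // xP.
Qed.

Lemma inS1 n : inS n 1.
Proof.
rewrite /inS coprime1n; apply/eqP/big1_seq => p /andP[_].
by rewrite mem_primes => /and3P[p_pr _ _]; rewrite legendre1 ?prime_gt1 ?expr1n.
Qed.

Lemma inS_chinese n q (b : nat -> nat) : odd n -> squarefree n -> q \in primes n ->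
    (forall p, p \in primes n -> ~~ (p %| b p)) ->
  exists a, inS n a /\ forall p, p \in primes n -> p != q -> a = b p %[mod p].
Proof.
move=> n_odd n_sf q_n b_cop.
set P := (\prod_(p <- primes n | p != q) legendre (b p) p)%R.
have P_sqr : (P ^+ 2 = 1)%R.
  by rewrite -prodrXl big1_seq // => p /andP[_ /b_cop/legendre_sqr].
have := q_n; rewrite mem_primes => /and3P[q_pr _ q_dvd].
(* The residue of a mod q is free: its symbol is chosen to cancel the product P of the others. *)
have [g q_g g_P] := legendre_onto q_pr (dvdn_odd q_dvd n_odd) P_sqr.
pose r p := if p == q then g else b p.
have r_cop p : p \in primes n -> ~~ (p %| r p).
  by rewrite /r; case: eqP => [-> | _]; [ | exact: b_cop].
have [a aP] := chinese_primes r (primes_uniq n) (all_prime_primes n).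
exists a; split => [ | p p_n p_q]; last by rewrite aP // /r ifN.
apply/andP; split.
  rewrite coprime_primes ?squarefree_gt0 //; apply/allP => p p_n.
  by rewrite /dvdn aP //; exact: r_cop.
rewrite jacobi_squarefree // (eq_big_seq (fun p => legendre (r p) p)) => [|p p_n]; last first.
  exact/legendre_mod/aP.
rewrite (bigD1_seq q) ?primes_uniq //= {1}/r eqxx g_P.
rewrite (eq_bigr (fun p => legendre (b p) p)) => [|p /negbTE p_q]; last by rewrite /r p_q.
by rewrite -/P -expr2 P_sqr.
Qed.

Lemma inS_lift n x (b : nat -> nat) : odd n -> squarefree n ->
    (forall p, p \in primes n -> ~~ (p %| b p)) ->
    (coprime x n -> forall p, p \in primes n -> b p = 1 %[mod p]) ->
  exists a, inS n a /\ forall p, p \in primes n -> ~~ (p %| x) -> a = b p %[mod p].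
Proof.
move=> n_odd n_sf b_cop b1.
have [x_cop | ] := boolP (coprime x n).
  by exists 1; split => [ | p p_n _]; [exact: inS1 | rewrite b1].
rewrite coprime_primes ?squarefree_gt0 // => /allPn[q q_n /negPn q_x].
have [a [a_S aP]] := inS_chinese n_odd n_sf q_n b_cop.
by exists a; split => // p p_n p_x; apply: aP => //; apply: contraNneq p_x => ->.
Qed.

Lemma weighted_sum_congr d N (a b x : nat -> nat) :
    (forall i, i < N -> ~~ (d %| x i) -> a i = b i %[mod d]) ->
  \sum_(i < N) a i * x i = \sum_(i < N) b i * x i %[mod d].
Proof.
move=> ab; rewrite -modn_summ -[in RHS]modn_summ; congr (_ %% d).
apply: eq_bigr => i _; have [d_x | /(ab i (ltn_ord i)) ab_i] := boolP (d %| x i).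
  by rewrite !(eqP (dvdn_mull _ d_x)).
by rewrite -modnMml ab_i modnMml.
Qed.

Theorem lemma2p10 (n : nat) (s : seq nat) :
  odd n -> squarefree n ->
  (forall p, prime p -> p %| n -> 2 <= count (fun x => coprime x p) s) ->
  count (fun x => coprime x n) s <= 1 ->
  weighted_zero_sum n (inS n) s.
Proof.
move=> n_odd n_sf two_coprime units_le1.
pose u := find (fun x => coprime x n) s.
have local_c p : exists c : nat -> nat, p \in primes n ->
    [/\ forall i, ~~ (p %| c i), c u = 1 & p %| \sum_(i < size s) c i * nth 0 s i].
  have [p_n | _] := boolP (p \in primes n); last by exists (fun=> 0).
  have := p_n; rewrite mem_primes => /and3P[p_pr _ p_dvd].
  have [c c_P] := local_weights u p_pr (dvdn_odd p_dvd n_odd) (two_coprime p p_pr p_dvd).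
  by exists c.
have [c cP] := functional_choice _ local_c.
have global_a i : exists a, i < size s ->
    inS n a /\ forall p, p \in primes n -> ~~ (p %| nth 0 s i) -> a = c p i %[mod p].
  have [i_lt | _] := ltnP i (size s); last by exists 0.
  have [ | | a a_P] := inS_lift (x := nth 0 s i) (b := fun p => c p i) n_odd n_sf.
  - by move=> p /cP[].
  - move=> x_cop p /cP[_ c_u _].
    by rewrite (count_le1_nth_find units_le1 i_lt x_cop) c_u.
  - by exists a.
have [a aP] := functional_choice _ global_a.
exists a; split => [i /aP[] // | ].
apply/eqP/modn_partP => [ | p p_n]; first exact: squarefree_gt0.
rewrite partn_squarefree // (weighted_sum_congr (b := c p)) => [ | i i_lt]; last first.
  by case: (aP i i_lt) => _; apply.
by rewrite mod0n; apply/eqP; case: (cP p p_n).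
Qed.
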